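(* Let $\alpha,\beta,\gamma\in\mathbb{F}\setminus\{\frac12\}$, and let $\mathbf{A}$ be the 5-dimensional LV algebra with natural basis $e_1,\dots,e_5$ in which $e_1e_2=\alpha e_1+(1-\alpha)e_2$, $e_1e_5=\gamma e_1+(1-\gamma)e_5$, $e_2e_5=\beta e_2+(1-\beta)e_5$, and $e_ie_j=\frac12(e_i+e_j)$ for all other pairs $i,j$. Then $\mathrm{Der}(\mathbf{A})=\{f\in L(\mathbf{A}) : \mathrm{Im}(f)\subseteq\langle e_3-e_4\rangle \text{ and } f(e_1)=f(e_2)=f(e_5)\}$.
   Context: Let $\mathbb{F}$ be a field of characteristic different from $2$. A Lotka–Volterra (LV) algebra of dimension $5$ over $\mathbb{F}$ is a commutative (not necessarily associative) $\mathbb{F}$-algebra $\mathbf{A}$ with a basis $e_1,\dots,e_5$ (the natural basis) such that $e_ie_j=\alpha_{ij}e_i+\alpha_{ji}e_j$ with $\alpha_{ij}\in\mathbb{F}$, $\alpha_{ii}=\frac12$ and $\alpha_{ij}+\alpha_{ji}=1$ for all $i,j$. A derivation is a linear map $D:\mathbf{A}\to\mathbf{A}$ with $D(uv)=D(u)v+uD(v)$ for all $u,v$; $\mathrm{Der}(\mathbf{A})$ is the set of derivations, $L(\mathbf{A})$ the set of linear maps $\mathbf{A}\to\mathbf{A}$, and $\langle x_1,\dots,x_k\rangle$ the linear span. *)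

From HB Require Import structures.
From mathcomp Require Import all_boot all_order all_algebra.
Set Implicit Arguments. Unset Strict Implicit. Unset Printing Implicit Defensive.
Import Order.TTheory GRing.Theory Num.Theory.
Local Open Scope ring_scope.

(* Vectors of the 5-dimensional algebra are row vectors 'rV[F]_5;
   the natural basis e_1..e_5 is e 0 .. e 4 (0-indexed). *)
Definition e {F : fieldType} (i : 'I_5) : 'rV[F]_5 := delta_mx 0 i.

Definition lvmul {F : fieldType} (a : 'M[F]_5) (u v : 'rV[F]_5) : 'rV[F]_5 :=
  \sum_(i < 5) \sum_(j < 5) (u 0 i * v 0 j) *: (a i j *: e i + a j i *: e j).

Definition is_LV {F : fieldType} (a : 'M[F]_5) : Prop :=
  (forall i, a i i = 2%:R^-1) /\ (forall i j, a i j + a j i = 1).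

(* Linear maps A -> A are represented by matrices acting on the right: f(u) = u *m D. *)
Definition is_derivation {F : fieldType} (a : 'M[F]_5) (D : 'M[F]_5) : Prop :=
  forall u v : 'rV[F]_5,
    lvmul a u v *m D = lvmul a (u *m D) v + lvmul a u (v *m D).

(* Structure constants of the algebra of the theorem (indices 0,1,4 = e_1,e_2,e_5). *)
Definition thm6_mx {F : fieldType} (alpha beta gamma : F) : 'M[F]_5 :=
  \matrix_(i < 5, j < 5)
    if (val i == 0%N) && (val j == 1%N) then alpha
    else if (val i == 1%N) && (val j == 0%N) then 1 - alpha
    else if (val i == 0%N) && (val j == 4%N) then gamma
    else if (val i == 4%N) && (val j == 0%N) then 1 - gamma
    else if (val i == 1%N) && (val j == 4%N) then beta
    else if (val i == 4%N) && (val j == 1%N) then 1 - beta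
    else 2%:R^-1.

(* Write D i k for the e_k-coordinate of D(e_i), and let S = {1, 2, 5} be the indices
   whose mutual structure constants differ from 1/2.  The derivation identity on basis
   pairs gives linear equations: the one for e_i e_i = e_i kills the e_k-coordinate of
   D(e_i) whenever a_ki <> 1/2; the triples (i, j, k) kill the S-coordinates of every
   D(e_i) and make the D(e_i), i in S, agree off S; and i = j = k then forces every D(e_i)
   to have coordinate sum 0.  Hence D(e_i) lies in <e_3 - e_4>, with
   D(e_1) = D(e_2) = D(e_5).
   Conversely, if D x = phi(x) (e_3 - e_4), then x (e_3 - e_4) = omega(x)/2 (e_3 - e_4)
   for the weight omega(x) = sum of coordinates, which is multiplicative; as the e_3, e_4
   coordinates of xy are (x_k omega(y) + y_k omega(x))/2, this gives
   phi(xy) = (phi(x) omega(y) + omega(x) phi(y))/2, the derivation identity. *)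

From HB Require Import structures.
From mathcomp Require Import all_boot all_order all_algebra ring.
Set Implicit Arguments.
Unset Strict Implicit.
Unset Printing Implicit Defensive.
Import GRing.Theory.
Local Open Scope ring_scope.

Section LVDerivations.

Variable F : fieldType.

Lemma eE (i k : 'I_5) : (e i : 'rV[F]_5) 0 k = (i == k)%:R.
Proof. by rewrite mxE eqxx eq_sym. Qed.

Lemma sum_mul_e (x : 'I_5 -> F) (j : 'I_5) : \sum_l x l * (e j : 'rV[F]_5) 0 l = x j.
Proof.
rewrite (bigD1 j) //= eE eqxx mulr1 big1 ?addr0 // => l lj.
by rewrite eE eq_sym (negbTE lj) mulr0.
Qed.

Lemma lvmulE (a : 'M[F]_5) (u v : 'rV[F]_5) (k : 'I_5) :
  lvmul a u v 0 k = u 0 k * (\sum_j a k j * v 0 j) + v 0 k * (\sum_i a k i * u 0 i).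
Proof.
rewrite /lvmul summxE.
under eq_bigr => i _ do rewrite summxE.
under eq_bigr => i _ do under eq_bigr => j _ do rewrite !mxE eqxx /= mulrDr.
under eq_bigr => i _ do rewrite big_split /=.
rewrite big_split /=; congr (_ + _).
  rewrite (bigD1 k) //= addrC big1 ?add0r; last first.
    by move=> i ik; apply: big1 => j _; rewrite eq_sym (negbTE ik) !mulr0.
  by rewrite big_distrr /=; apply: eq_bigr => j _; rewrite eqxx mulr1; ring.
rewrite exchange_big /= (bigD1 k) //= addrC big1 ?add0r; last first.
  by move=> i ik; apply: big1 => j _; rewrite eq_sym (negbTE ik) !mulr0.
by rewrite big_distrr /=; apply: eq_bigr => j _; rewrite eqxx mulr1; ring.
Qed.

Lemma lvmul_e (a : 'M[F]_5) (i j : 'I_5) : lvmul a (e i) (e j) = a i j *: e i + a j i *: e j.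
Proof.
apply/rowP => k; rewrite lvmulE !sum_mul_e !(eE, mxE).
by case: (eqVneq i k) => [->|_]; case: (eqVneq j k) => [->|_]; rewrite /=; ring.
Qed.

Lemma lvmulC (a : 'M[F]_5) (u v : 'rV[F]_5) : lvmul a u v = lvmul a v u.
Proof. by apply/rowP => k; rewrite !lvmulE addrC. Qed.

Lemma lvmulZl (a : 'M[F]_5) (c : F) (u v : 'rV[F]_5) :
  lvmul a (c *: u) v = c *: lvmul a u v.
Proof.
apply/rowP => k; rewrite mxE !lvmulE mxE.
have -> : \sum_i a k i * (c *: u) 0 i = c * \sum_i a k i * u 0 i.
  by rewrite mulr_sumr; apply: eq_bigr => i _; rewrite mxE mulrCA.
by ring.
Qed.

Lemma mulmx_scaled_rows m n (D : 'M[F]_(m, n)) (c : 'I_m -> F) (w : 'rV[F]_n) (u : 'rV[F]_m) :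
  (forall i, row i D = c i *: w) -> u *m D = (\sum_i u 0 i * c i) *: w.
Proof.
move=> rowD; rewrite mulmx_sum_row scaler_suml.
by apply: eq_bigr => i _; rewrite rowD scalerA.
Qed.

Definition lv_weight (u : 'rV[F]_5) : F := \sum_i u 0 i.

Lemma lv_weightM (a : 'M[F]_5) (u v : 'rV[F]_5) : (forall i j, a i j + a j i = 1) ->
  lv_weight (lvmul a u v) = lv_weight u * lv_weight v.
Proof.
move=> a_skew; rewrite /lv_weight mulr_suml.
under eq_bigr => k _ do rewrite lvmulE !mulr_sumr.
rewrite big_split /= [X in _ + X]exchange_big -big_split /=.
apply: eq_bigr => k _; rewrite mulr_sumr -big_split /=; apply: eq_bigr => j _.
by rewrite -[u 0 k * v 0 j]mulr1 -(a_skew k j); ring.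
Qed.

Lemma derivation_coord (a D : 'M[F]_5) (i j k : 'I_5) : is_derivation a D ->
  a i j * D i k + a j i * D j k =
  D i k * a k j + (j == k)%:R * (\sum_l a k l * D i l)
  + ((i == k)%:R * (\sum_l a k l * D j l) + D j k * a k i).
Proof.
move=> /(_ (e i) (e j)) /(congr1 (fun M : 'rV_5 => M 0 k)).
rewrite lvmul_e mulmxDl -!scalemxAl -!rowE !mxE !lvmulE !sum_mul_e !eE !mxE => ->.
by congr (_ + _ * _ + (_ * _ + _)); apply: eq_bigr => l _; rewrite mxE.
Qed.

Variables (a D : 'M[F]_5).
Hypothesis two_neq0 : (2%:R : F) != 0.
Hypothesis a_diag : forall i, a i i = 2%:R^-1.
Hypothesis derD : is_derivation a D.

Lemma derivation_diag i : \sum_l a i l * D i l = 0.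
Proof.
have := derivation_coord i i i derD; rewrite eqxx a_diag /= mul1r.
move/esym/eqP; rewrite -subr_eq0 => /eqP h.
apply: (mulfI two_neq0); by rewrite mulr0 -[X in _ = X]h; ring.
Qed.

Lemma derivation_offdiag i k : a k i != 2%:R^-1 -> D i k = 0.
Proof.
move=> aki; have ik : i != k by apply: contraNneq aki => ->; rewrite a_diag.
have := derivation_coord i i k derD; rewrite (negbTE ik) a_diag /=.
move/esym/eqP; rewrite -subr_eq0 => /eqP h.
have c_neq0 : 2%:R * (a k i - 2%:R^-1) != 0 by rewrite mulf_neq0 ?subr_eq0.
by apply: (mulfI c_neq0); rewrite mulr0 -[X in _ = X]h; field.
Qed.

Lemma derivation_triple i j k : i != k -> j != k ->
  (a i j - a k j) * D i k + (a j i - a k i) * D j k = 0.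
Proof.
move=> ik jk; have := derivation_coord i j k derD; rewrite (negbTE ik) (negbTE jk) /=.
by move/eqP; rewrite -subr_eq0 => /eqP h; rewrite -[X in _ = X]h; ring.
Qed.

Lemma derivation_pair i j : i != j -> (a i j - a j j) * D i j = \sum_l a j l * D i l.
Proof.
move=> ij; have := derivation_coord i j j derD; rewrite eqxx (negbTE ij) /=.
move/eqP; rewrite -subr_eq0 => /eqP h.
by apply: subr0_eq; rewrite -[X in _ = X]h; ring.
Qed.

Section Support.

Variable S : {set 'I_5}.
Hypothesis a_skew : forall i j, a i j + a j i = 1.
Hypothesis a_off_support : forall i j, (i \notin S) || (j \notin S) -> a i j = 2%:R^-1.
Hypothesis a_on_support : forall i j, i \in S -> j \in S -> i != j -> a i j != 2%:R^-1.
Hypothesis S_nontrivial : (1 < #|S|)%N.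

Lemma sum_off_support_row l (x : 'I_5 -> F) :
  l \notin S -> \sum_j a l j * x j = 2%:R^-1 * \sum_j x j.
Proof.
by move=> lS; rewrite mulr_sumr; apply: eq_bigr => j _; rewrite a_off_support ?lS.
Qed.

Lemma lvmul_off_support_coord (u v : 'rV[F]_5) l : l \notin S ->
  lvmul a u v 0 l = 2%:R^-1 * (u 0 l * lv_weight v + v 0 l * lv_weight u).
Proof. by move=> lS; rewrite lvmulE !sum_off_support_row // /lv_weight; ring. Qed.

Lemma lvmul_off_support_diff (u : 'rV[F]_5) i j : i \notin S -> j \notin S ->
  lvmul a (e i - e j) u = (2%:R^-1 * lv_weight u) *: (e i - e j).
Proof.
move=> iS jS; apply/rowP => k; rewrite lvmulE [RHS]mxE.
have -> : \sum_l a k l * (e i - e j) 0 l = a k i - a k j.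
  rewrite -(sum_mul_e (a k) i) -(sum_mul_e (a k) j) -sumrB.
  by apply: eq_bigr => l _; rewrite !mxE mulrBr.
rewrite !a_off_support ?iS ?jS ?orbT // subrr mulr0 addr0.
have [kS|kS] := boolP (k \in S); last by rewrite sum_off_support_row // mulrC.
have [ik jk] : i != k /\ j != k by split; [apply: contraNneq iS => -> | apply: contraNneq jS => ->].
by rewrite !(eE, mxE) (negbTE ik) (negbTE jk) subrr !mul0r mulr0.
Qed.

Lemma support_partner k : k \in S -> exists2 j, j \in S & j != k.
Proof.
move=> kS; have /card_gt1P[x [y [xS yS xy]]] := S_nontrivial.
by case: (eqVneq x k) => [xk|]; [exists y; rewrite // -xk eq_sym | exists x].
Qed.

Lemma derivation_support_offdiag i k : i \in S -> k \in S -> i != k -> D i k = 0.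
Proof. by move=> iS kS ik; apply: derivation_offdiag; rewrite a_on_support // eq_sym. Qed.

Lemma derivation_support_diag i : i \in S -> D i i = 0.
Proof.
move=> iS; have [j jS ji] := support_partner iS; have ij : i != j by rewrite eq_sym.
have := derivation_pair ij; rewrite derivation_support_offdiag // mulr0 => /esym sum_j.
(* Subtracting the diagonal identity for i from the pair identity for (i, j) isolates D i i. *)
have sum_ji : \sum_l (a j l - a i l) * D i l = (a j i - a i i) * D i i.
  rewrite (bigD1 i) //= big1 ?addr0 // => l li.
  have [lS|lS] := boolP (l \in S); first by rewrite derivation_support_offdiag ?mulr0 // eq_sym.
  by rewrite !a_off_support ?lS ?orbT ?subrr ?mul0r.
move: sum_ji; rewrite (eq_bigr _ (fun l _ => mulrBl _ _ _)) sumrB sum_j derivation_diag.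
by move/esym/eqP; rewrite subrr mulf_eq0 a_diag subr_eq0 (negbTE (a_on_support jS iS ji)) => /eqP.
Qed.

Lemma derivation_off_support_row i k : i \notin S -> k \in S -> D i k = 0.
Proof.
move=> iS kS; have [j jS jk] := support_partner kS; have kj : k != j by rewrite eq_sym.
have ik : i != k by apply: contraNneq iS => ->.
have := derivation_triple ik jk.
rewrite (@a_off_support i j) ?iS // (@a_off_support j i) ?iS ?orbT //.
rewrite (@a_off_support k i) ?iS ?orbT // subrr mul0r addr0 => /eqP.
by rewrite mulf_eq0 subr_eq0 eq_sym (negbTE (a_on_support kS jS kj)) => /eqP.
Qed.

Lemma derivation_vanish_on_support i k : k \in S -> D i k = 0.
Proof.
move=> kS; have [iS|iS] := boolP (i \in S); last exact: derivation_off_support_row.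
have [<-|ik] := eqVneq i k; [exact: derivation_support_diag | exact: derivation_support_offdiag].
Qed.

Lemma derivation_row_sum i : \sum_l D i l = 0.
Proof.
have := derivation_diag i; rewrite (eq_bigr (fun l => 2%:R^-1 * D i l)) => [|l _].
  by rewrite -big_distrr /= => /eqP; rewrite mulf_eq0 invr_eq0 (negbTE two_neq0) => /eqP.
have [lS|lS] := boolP (l \in S); first by rewrite derivation_vanish_on_support ?mulr0.
by rewrite a_off_support ?lS ?orbT.
Qed.

Lemma derivation_support_rows i j k : i \in S -> j \in S -> k \notin S -> D i k = D j k.
Proof.
move=> iS jS kS; have [->//|ij] := eqVneq i j.
have ik : i != k by apply: contraNneq kS => <-.
have jk : j != k by apply: contraNneq kS => <-.
have aji : a j i = 1 - a i j by rewrite -(a_skew i j); ring.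
have := derivation_triple ik jk; rewrite aji (@a_off_support k i) ?kS // (@a_off_support k j) ?kS // => h.
have : (a i j - 2%:R^-1) * (D i k - D j k) = 0 by rewrite -[X in _ = X]h; field.
by move/eqP; rewrite mulf_eq0 !subr_eq0 (negbTE (a_on_support iS jS ij)) => /eqP.
Qed.

End Support.

End LVDerivations.


Lemma forall_ord5 (P : 'I_5 -> Prop) :
  P (inord 0) -> P (inord 1) -> P (inord 2) -> P (inord 3) -> P (inord 4) -> forall k, P k.
Proof.
move=> P0 P1 P2 P3 P4 k; rewrite -(inord_val k).
by case: k => [[|[|[|[|[|m]]]]] ?].
Qed.

Lemma sum_ord5 (F : nmodType) (x : 'I_5 -> F) :
  \sum_(i < 5) x i = x (inord 0) + x (inord 1) + x (inord 2) + x (inord 3) + x (inord 4).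
Proof.
rewrite !big_ord_recr big_ord0 /= add0r.
by repeat congr (_ + _); congr x; apply: val_inj; rewrite /= inordK.
Qed.

Lemma val_inord5 m : (m < 5)%N -> val (inord m : 'I_5) = m.
Proof. exact: inordK. Qed.

Lemma eq_inord5 m n : (m < 5)%N -> (n < 5)%N -> (inord m == inord n :> 'I_5) = (m == n).
Proof. by move=> m5 n5; rewrite -val_eqE !val_inord5. Qed.

Definition thm6_support : {set 'I_5} := [set i : 'I_5 | val i \in [:: 0; 1; 4]%N].

Section Theorem6.

Variables (F : fieldType) (alpha beta gamma : F).
Hypothesis two_neq0 : (2%:R : F) != 0.
Hypotheses (ha : alpha != 2%:R^-1) (hb : beta != 2%:R^-1) (hg : gamma != 2%:R^-1).
Local Notation a := (thm6_mx alpha beta gamma).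

Lemma oneB_neq_half (x : F) : x != 2%:R^-1 -> 1 - x != 2%:R^-1.
Proof.
apply: contraNneq => half_x; have -> : x = 1 - (1 - x) by ring.
by apply/eqP; rewrite half_x; field.
Qed.

Lemma thm6_LV : is_LV a.
Proof.
split=> [|i j]; [apply: forall_ord5 | move: i j; apply: forall_ord5; apply: forall_ord5];
  by rewrite !mxE !val_inord5 //=; field.
Qed.

Lemma thm6_off_support i j : (i \notin thm6_support) || (j \notin thm6_support) -> a i j = 2%:R^-1.
Proof.
by move: i j; apply: forall_ord5; apply: forall_ord5; rewrite !inE !mxE !val_inord5.
Qed.

Lemma thm6_on_support i j :
  i \in thm6_support -> j \in thm6_support -> i != j -> a i j != 2%:R^-1.
Proof.
move: i j; apply: forall_ord5; apply: forall_ord5; rewrite !inE -val_eqE !mxE !val_inord5 //=;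
  by rewrite ?oneB_neq_half.
Qed.

Lemma thm6_support_nontrivial : (1 < #|thm6_support|)%N.
Proof.
apply/card_gt1P; exists (inord 0), (inord 1).
by rewrite !inE -val_eqE !val_inord5.
Qed.

Local Notation w := (e (inord 2) - e (inord 3) : 'rV[F]_5).

Lemma thm6_derivation_row D : is_derivation a D -> forall i, row i D = D i (inord 2) *: w.
Proof.
move=> derD i; have [a_diag a_skew] := thm6_LV.
have vanish := derivation_vanish_on_support two_neq0 a_diag derD
  thm6_off_support thm6_on_support thm6_support_nontrivial i.
have [D0 D1 D4] : [/\ D i (inord 0) = 0, D i (inord 1) = 0 & D i (inord 4) = 0].
  by split; apply: vanish; rewrite inE val_inord5.
have := derivation_row_sum two_neq0 a_diag derD
  thm6_off_support thm6_on_support thm6_support_nontrivial i.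
rewrite sum_ord5 D0 D1 D4 !add0r addr0 => /eqP; rewrite addrC addr_eq0 => /eqP D3.
apply/rowP; apply: forall_ord5; rewrite !(eE, mxE) !eq_inord5 //= ?D0 ?D1 ?D4 ?D3; ring.
Qed.

Lemma thm6_derivation_of_rows D : (forall i, row i D = D i (inord 2) *: w) ->
    D (inord 0) (inord 2) = D (inord 1) (inord 2) ->
    D (inord 1) (inord 2) = D (inord 4) (inord 2) ->
  is_derivation a D.
Proof.
move=> rowD D01 D14 u v; have [_ a_skew] := thm6_LV.
have phiE (x : 'rV_5) : \sum_i x 0 i * D i (inord 2) = D (inord 0) (inord 2) * lv_weight x
    + (D (inord 2) (inord 2) - D (inord 0) (inord 2)) * x 0 (inord 2)
    + (D (inord 3) (inord 2) - D (inord 0) (inord 2)) * x 0 (inord 3).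
  by rewrite /lv_weight !sum_ord5 -D14 -D01; ring.
have off23 : (inord 2 \notin thm6_support) && (inord 3 \notin thm6_support).
  by rewrite !inE !val_inord5.
have [S2 S3] := andP off23.
have w_lvmul x : lvmul a w x = (2%:R^-1 * lv_weight x) *: w.
  exact: lvmul_off_support_diff thm6_off_support _ _ _ S2 S3.
rewrite !(mulmx_scaled_rows _ rowD) lvmulZl (lvmulC _ u (_ *: _)) lvmulZl !w_lvmul !scalerA -scalerDl.
congr (_ *: _); rewrite !phiE lv_weightM // !(lvmul_off_support_coord thm6_off_support) //.
by field.
Qed.

Lemma thm6_derivation_rows_eq D i j : is_derivation a D ->
  i \in thm6_support -> j \in thm6_support -> row i D = row j D.
Proof.
move=> derD iS jS; have [a_diag a_skew] := thm6_LV.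
rewrite !(thm6_derivation_row derD) (derivation_support_rows two_neq0 derD a_skew
  thm6_off_support thm6_on_support iS jS) //; by rewrite inE val_inord5.
Qed.

Lemma thm6_rows_of_image D : (forall u : 'rV_5, exists c, u *m D = c *: w) ->
  forall i, row i D = D i (inord 2) *: w.
Proof.
move=> imD i; have [c Dc] := imD (e i); rewrite /e -rowE in Dc; rewrite Dc.
have := congr1 (fun M : 'rV_5 => M 0 (inord 2)) Dc.
by rewrite !(eE, mxE) !eq_inord5 //= subr0 mulr1 => ->.
Qed.

End Theorem6.

Theorem mainTheorem6 (F : fieldType) (hchar : (2%:R : F) != 0)
    (alpha beta gamma : F)
    (ha : alpha != 2%:R^-1) (hb : beta != 2%:R^-1) (hg : gamma != 2%:R^-1)
    (D : 'M[F]_5) :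
  is_derivation (thm6_mx alpha beta gamma) D <->
  ((forall u : 'rV[F]_5, exists c : F,
       u *m D = c *: (e (inord 2) - e (inord 3))) /\
   e (inord 0) *m D = e (inord 1) *m D /\
   e (inord 1) *m D = e (inord 4) *m D).
Proof.
rewrite /e -!rowE; split=> [derD | [imD [D01 D14]]].
  split; first by move=> u; exists (\sum_i u 0 i * D i (inord 2));
    apply: mulmx_scaled_rows; exact: thm6_derivation_row derD.
  by split; apply: (thm6_derivation_rows_eq hchar ha hb hg derD); rewrite inE val_inord5.
apply: (thm6_derivation_of_rows _ _ _ hchar (thm6_rows_of_image imD)).
  by have := congr1 (fun M : 'rV_5 => M 0 (inord 2)) D01; rewrite !mxE.
by have := congr1 (fun M : 'rV_5 => M 0 (inord 2)) D14; rewrite !mxE.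
Qed.
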